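(* Let $G$ and $H$ be groups such that the power quandles $\mathrm{Pq}(G)$ and $\mathrm{Pq}(H)$ are isomorphic. Then the central quotients are isomorphic as groups: $G/\mathrm{Z}(G)\cong H/\mathrm{Z}(H)$.
   Context: A power quandle $(P,\rhd,\pi,e)$ consists of a set $P$, a binary operation $\rhd$, an element $e$, and maps $\pi^n\colon P\to P$ ($n\in\mathbb{Z}$) satisfying: each $\lambda_a\colon b\mapsto a\rhd b$ is bijective and $a\rhd(b\rhd c)=(a\rhd b)\rhd(a\rhd c)$; $a\rhd a=a$; $e\rhd b=b$, $a\rhd e=e$; $\pi^1=\mathrm{id}$, $\pi^m\circ\pi^n=\pi^{mn}$; $\pi^0(a)=e$; $a\rhd\pi^n(b)=\pi^n(a\rhd b)$; $\pi^n(a)\rhd b=\lambda_a^n(b)$. An isomorphism of power quandles is a bijection preserving $\rhd$, all $\pi^n$ and $e$. For a group $G$, $\mathrm{Pq}(G)$ is the power quandle on the underlying set of $G$ with $a\rhd b=aba^{-1}$, $\pi^n(a)=a^n$, and $e$ the identity element. $\mathrm{Z}(G)$ denotes the center of $G$. *)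

From HB Require Import structures.
From mathcomp Require Import all_boot monoid ssralg ssrint.

Set Implicit Arguments.
Unset Strict Implicit.
Unset Printing Implicit Defensive.

Local Open Scope group_scope.

Section PowerQuandleOfGroup.
Variable G : groupType.

Definition zpow (a : G) (n : int) : G :=
  match n with
  | Posz k => a ^+ k
  | Negz k => (a ^+ k.+1)^-1
  end.

Definition pq_op (a b : G) : G := a * b * a^-1.
Definition pq_pow (n : int) (a : G) : G := zpow a n.
Definition pq_e : G := 1.

Definition central (z : G) : Prop := forall x : G, x * z = z * x.

(* The quotient G/Z(G): its elements are the cosets xZ(G), represented as
   predicates on G. *)
Definition cosetZ : Type :=
  {S : G -> Prop | exists x : G, S = (fun y => central (x^-1 * y))}.

Definition cosZ (x : G) : cosetZ :=
  exist (fun S : G -> Prop => exists x0 : G, S = (fun y => central (x0^-1 * y)))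
        (fun y => central (x^-1 * y))
        (ex_intro _ x erefl).
End PowerQuandleOfGroup.

Definition pq_iso (G H : groupType) (f : G -> H) : Prop :=
  bijective f /\
  (forall a b : G, f (pq_op a b) = pq_op (f a) (f b)) /\
  (forall (n : int) (a : G), f (pq_pow n a) = pq_pow n (f a)) /\
  f (pq_e G) = pq_e H.

(* Group isomorphism G/Z(G) ~= H/Z(H): a bijection F between the coset types
   which is multiplicative for the quotient multiplication
   (xZ)(yZ) = (xy)Z, written via representatives. *)
Definition quotZ_iso (G H : groupType) (F : cosetZ G -> cosetZ H) : Prop :=
  bijective F /\
  (forall (x y : G) (a b : H),
      F (cosZ x) = cosZ a -> F (cosZ y) = cosZ b ->
      F (cosZ (x * y)) = cosZ (a * b)).

(* Z(G) is exactly the set of elements acting trivially by conjugation, so the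
   coset xZ(G) is determined by the map b |-> x |> b, and G/Z(G) is the group of
   these maps under composition.  A power quandle isomorphism f intertwines
   them, f (x |> b) = f x |> f b, hence xZ(G) |-> f(x)Z(H) is a well defined
   bijection; it is multiplicative because (xy) |> b = x |> (y |> b). *)
From HB Require Import structures.
From mathcomp Require Import all_boot monoid ssralg ssrint.
From Stdlib Require Import ClassicalEpsilon FunctionalExtensionality PropExtensionality ProofIrrelevance.

Set Implicit Arguments.
Unset Strict Implicit.
Local Open Scope group_scope.

Section CentralCosets.
Variable G : groupType.

Lemma pq_opM (x y b : G) : pq_op (x * y) b = pq_op x (pq_op y b).
Proof. by rewrite /pq_op invgM !mulgA. Qed.

Lemma central_mulVg (u v : G) : central (u^-1 * v) <-> pq_op u =1 pq_op v.
Proof.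
rewrite /central /pq_op; split=> uv x.
- have := uv x; rewrite !mulgA => /(congr1 (fun w => u * w * v^-1)).
  by rewrite !mulgA mulgK mulgV mul1g.
- have := uv x => /(congr1 (fun w => u^-1 * w * v)).
  by rewrite !mulgA mulVg mul1g mulgVK -!mulgA.
Qed.

Lemma cosZ_eqP (u v : G) : cosZ u = cosZ v <-> pq_op u =1 pq_op v.
Proof.
split=> [/(f_equal (@proj1_sig _ _)) /= uv | uv].
  apply/central_mulVg; rewrite (f_equal (fun S => S v) uv) mulVg => x.
  by rewrite mulg1 mul1g.
apply: eq_sig_hprop => [? ? ?|/=]; first exact: proof_irrelevance.
apply: functional_extensionality => y; apply: propositional_extensionality.
by rewrite !central_mulVg; split=> yv x; rewrite -yv.
Qed.

Definition cosZ_repr (S : cosetZ G) : G :=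
  proj1_sig (constructive_indefinite_description _ (proj2_sig S)).

Lemma cosZ_reprK (S : cosetZ G) : cosZ (cosZ_repr S) = S.
Proof.
rewrite /cosZ_repr; case: constructive_indefinite_description => x Sx /=.
apply: eq_sig_hprop => [? ? ?|/=]; first exact: proof_irrelevance.
by rewrite Sx.
Qed.

End CentralCosets.

Section TransportCosets.
Variables (G H : groupType) (f : G -> H) (g : H -> G).
Hypothesis fK : cancel f g.
Hypothesis gK : cancel g f.
Hypothesis f_op : {morph f : a b / pq_op a b}.

Lemma can_pq_op_morph : {morph g : a b / pq_op a b}.
Proof. by move=> a b; rewrite -{1}(gK a) -{1}(gK b) -f_op fK. Qed.

Lemma pq_op_transport (x y : G) :
  pq_op x =1 pq_op y -> pq_op (f x) =1 pq_op (f y).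
Proof. by move=> xy b; rewrite -(gK b) -!f_op xy. Qed.

Definition cosZ_map (S : cosetZ G) : cosetZ H := cosZ (f (cosZ_repr S)).

Lemma cosZ_mapE (x : G) : cosZ_map (cosZ x) = cosZ (f x).
Proof. by apply/cosZ_eqP/pq_op_transport/cosZ_eqP; rewrite cosZ_reprK. Qed.

Lemma cosZ_mapM (x y : G) (a b : H) :
  cosZ_map (cosZ x) = cosZ a -> cosZ_map (cosZ y) = cosZ b ->
  cosZ_map (cosZ (x * y)) = cosZ (a * b).
Proof.
rewrite !cosZ_mapE => /cosZ_eqP xa /cosZ_eqP yb; apply/cosZ_eqP => c.
by rewrite -(gK c) -f_op pq_opM !f_op gK yb xa -pq_opM.
Qed.

End TransportCosets.

Theorem mainTheorem4 (G H : groupType) :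
  (exists f : G -> H, pq_iso f) ->
  exists F : cosetZ G -> cosetZ H, quotZ_iso F.
Proof.
case=> f [[g fK gK] [f_op _]].
have g_op := can_pq_op_morph fK gK f_op.
exists (cosZ_map f); split; last exact: cosZ_mapM.
exists (cosZ_map g) => S; rewrite -(cosZ_reprK S).
- by rewrite (cosZ_mapE gK f_op) (cosZ_mapE fK g_op) fK.
- by rewrite (cosZ_mapE fK g_op) (cosZ_mapE gK f_op) gK.
Qed.
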